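(* Let $(\bar x,\bar y)$ be a local minimax point of $\min_{x\in X}\max_{y\in Y}f(x,y)$ and suppose $f$ is twice semidifferentiable at $(\bar x,\bar y)$. If for every $h\in T_Y(\bar y)\setminus\{0\}$, $$\mathrm{d}^2_{yy}f(\bar x,\bar y)(h)-\mathrm{d}^2\delta_{X\times Y}\big((\bar x,\bar y);\mathrm{d}f(\bar x,\bar y)\big)(0,h)<0,$$ then $(\bar x,\bar y)$ is a calm local minimax point.
   Context: $X\subseteq\mathbb{R}^n$, $Y\subseteq\mathbb{R}^m$ nonempty closed, $f:\mathbb{R}^n\times\mathbb{R}^m\to\mathbb{R}$; $\mathbb{B}_\epsilon(z)$ closed Euclidean ball. Standing assumption: for every $x\in X$, $\bar y\in Y$, $\epsilon\ge0$ the maximum of $f(x,\cdot)$ over $Y\cap\mathbb{B}_\epsilon(\bar y)$ is attained. A radius function is $\tau:[0,\infty)\to[0,\infty)$ with $\tau(0)=0$, $\tau(\delta)\to0$ as $\delta\downarrow0$; calm at $0$ if $\tau(\delta)\le\kappa\delta$ for all $\delta\in[0,\delta_1]$ for some $\kappa,\delta_1>0$. $(\bar x,\bar y)\in X\times Y$ is a local minimax point if there exist $\delta_0>0$ and a radius function $\tau$ with $f(\bar x,y)\le f(\bar x,\bar y)\le\max_{y'\in Y\cap\mathbb{B}_{\tau(\delta)}(\bar y)}f(x,y')$ for all $\delta\in(0,\delta_0]$, $x\in X\cap\mathbb{B}_\delta(\bar x)$, $y\in Y\cap\mathbb{B}_\delta(\bar y)$; calm local minimax if moreover $\tau$ can be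 taken calm at $0$. Variational notation: for $\psi:\mathbb{R}^r\to\mathbb{R}$, $\mathrm{d}\psi(\bar z)(w):=\liminf_{t\downarrow0,w'\to w}\frac{\psi(\bar z+tw')-\psi(\bar z)}{t}$; $\psi$ is semidifferentiable at $\bar z$ if for each $w$ this is a limit (real-valued); $\mathrm{d}^2\psi(\bar z)(w):=\liminf_{t\downarrow0,w'\to w}\frac{\psi(\bar z+tw')-\psi(\bar z)-t\,\mathrm{d}\psi(\bar z)(w')}{\frac12t^2}$; $\psi$ is twice semidifferentiable at $\bar z$ if it is semidifferentiable there and for each $w$ this liminf is a limit (real-valued). $\mathrm{d}f(\bar x,\bar y)(u,h)$ is the subderivative of $f$ at $(\bar x,\bar y)$ in direction $(u,h)$, and $\mathrm{d}^2_{yy}f(\bar x,\bar y)(h)$ is the second subderivative of $f(\bar x,\cdot)$ at $\bar y$. $T_S(\bar z)$ is the tangent cone ($w\in T_S(\bar z)$ iff $\exists t_k\downarrow0$, $w_k\to w$ with $\bar z+t_kw_k\in S$). For closed $S$, $\bar z\in S$, $\varphi:\mathbb{R}^r\to\mathbb{R}$: $\mathrm{d}^2\delta_S(\bar z;\varphi)(w):=\liminf_{t\downarrow0,\,w'\to w,\ \bar z+tw'\in S}\frac{-2\varphi(w')}{t}$ ($+\infty$ if no such $t,w'$). Thus $\mathrm{d}^2\delta_{X\times Y}((\bar x,\bar y);\mathrm{d}f(\bar x,\bar y))(0,h)=\liminf_{t\downarrow0,\,(u',h')\to(0,h),\ \bar x+tu'\in X,\ \bar y+th'\in Y}\frac{-2\,\mathrm{d}f(\bar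 x,\bar y)(u',h')}{t}$. *)

From HB Require Import structures.
From mathcomp Require Import all_boot all_order all_algebra.
From mathcomp Require Import all_classical all_reals all_analysis.
Set Implicit Arguments. Unset Strict Implicit. Unset Printing Implicit Defensive.
Import Order.TTheory GRing.Theory Num.Theory.
Import numFieldNormedType.Exports.
Local Open Scope classical_set_scope.
Local Open Scope ring_scope.

Section Defs.
Variable R : realType.

Definition enorm (k : nat) (v : 'rV[R]_k) : R :=
  Num.sqrt (\sum_(i < k) (v ord0 i) ^+ 2).

Definition cball (k : nat) (z : 'rV[R]_k) (eps : R) : set 'rV[R]_k :=
  [set w | enorm (w - z) <= eps].

(* liminf_{t \downarrow 0, w' -> w, P t w'} g t w'  (in \bar R; +oo if no admissible t,w') *)
Definition liminf0 (k : nat) (P : R -> 'rV[R]_k -> Prop)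
  (g : R -> 'rV[R]_k -> \bar R) (w : 'rV[R]_k) : \bar R :=
  ereal_sup [set ereal_inf [set g p.1 p.2 | p in
      [set p : R * 'rV[R]_k | 0 < p.1 < e /\ enorm (p.2 - w) < e /\ P p.1 p.2]]
    | e in [set e : R | 0 < e]].

Definition has_real_limit0 (k : nat) (g : R -> 'rV[R]_k -> \bar R)
  (w : 'rV[R]_k) : Prop :=
  exists L : R, forall e : R, 0 < e -> exists2 d : R, 0 < d &
    forall (t : R) (w' : 'rV[R]_k), 0 < t < d -> enorm (w' - w) < d ->
      ((L - e)%:E < g t w')%E /\ (g t w' < (L + e)%:E)%E.

Definition dq1 (k : nat) (psi : 'rV[R]_k -> R) (z : 'rV[R]_k)
  (t : R) (w' : 'rV[R]_k) : \bar R :=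
  ((psi (z + t *: w') - psi z) / t)%:E.

Definition subderiv (k : nat) (psi : 'rV[R]_k -> R) (z w : 'rV[R]_k) : \bar R :=
  liminf0 (fun _ _ => True) (dq1 psi z) w.

Definition semidifferentiable (k : nat) (psi : 'rV[R]_k -> R) (z : 'rV[R]_k) :=
  forall w, has_real_limit0 (dq1 psi z) w.

Definition dq2 (k : nat) (psi : 'rV[R]_k -> R) (z : 'rV[R]_k)
  (t : R) (w' : 'rV[R]_k) : \bar R :=
  (((psi (z + t *: w') - psi z)%:E - t%:E * subderiv psi z w')
     * ((t ^+ 2 / 2)^-1)%:E)%E.

Definition subderiv2 (k : nat) (psi : 'rV[R]_k -> R) (z w : 'rV[R]_k) : \bar R :=
  liminf0 (fun _ _ => True) (dq2 psi z) w.

Definition twice_semidifferentiable (k : nat) (psi : 'rV[R]_k -> R)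
  (z : 'rV[R]_k) :=
  semidifferentiable psi z /\ forall w, has_real_limit0 (dq2 psi z) w.

Definition tangent_cone (k : nat) (S : set 'rV[R]_k) (z : 'rV[R]_k) :
  set 'rV[R]_k :=
  [set w | exists (t : nat -> R) (wk : nat -> 'rV[R]_k),
     (forall j, 0 < t j) /\
     (forall e : R, 0 < e -> exists N : nat, forall j, (N <= j)%N ->
        `|t j| < e /\ enorm (wk j - w) < e) /\
     (forall j, S (z + t j *: wk j))].

Definition d2indicator (k : nat) (S : set 'rV[R]_k) (z : 'rV[R]_k)
  (phi : 'rV[R]_k -> \bar R) (w : 'rV[R]_k) : \bar R :=
  liminf0 (fun t w' => S (z + t *: w'))
          (fun t w' => ((- 2)%:E * phi w' * (t^-1)%:E)%E) w.

(* f on R^n x R^m viewed as a function on R^(n+m) via (x,y) |-> row_mx x y *)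
Definition joint (n m : nat) (f : 'rV[R]_n -> 'rV[R]_m -> R) : 'rV[R]_(n + m) -> R :=
  fun z => f (lsubmx z) (rsubmx z).

Definition prodset (n m : nat) (X : set 'rV[R]_n) (Y : set 'rV[R]_m) :
  set 'rV[R]_(n + m) := [set z | X (lsubmx z) /\ Y (rsubmx z)].

(* max_{y' in Y \cap B_eps(ybar)} f(x, y'), as a supremum in \bar R
   (it is attained under the standing assumption) *)
Definition maxloc (n m : nat) (f : 'rV[R]_n -> 'rV[R]_m -> R)
  (Y : set 'rV[R]_m) (x : 'rV[R]_n) (ybar : 'rV[R]_m) (eps : R) : \bar R :=
  ereal_sup [set (f x y')%:E | y' in Y `&` cball ybar eps].

Definition radius_function (tau : R -> R) : Prop :=
  tau 0 = 0 /\ (forall d, 0 <= d -> 0 <= tau d) /\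
  (forall e : R, 0 < e -> exists2 d1 : R, 0 < d1 &
     forall d, 0 < d < d1 -> tau d < e).

Definition calm_at0 (tau : R -> R) : Prop :=
  exists kappa d1 : R, 0 < kappa /\ 0 < d1 /\
    forall d, 0 <= d <= d1 -> tau d <= kappa * d.

Definition minimax_with (n m : nat) (f : 'rV[R]_n -> 'rV[R]_m -> R)
  (X : set 'rV[R]_n) (Y : set 'rV[R]_m) (xbar : 'rV[R]_n) (ybar : 'rV[R]_m)
  (d0 : R) (tau : R -> R) : Prop :=
  forall d, 0 < d <= d0 ->
    forall x y, X x -> cball xbar d x -> Y y -> cball ybar d y ->
      f xbar y <= f xbar ybar /\
      ((f xbar ybar)%:E <= maxloc f Y x ybar (tau d))%E.

Definition local_minimax (n m : nat) (f : 'rV[R]_n -> 'rV[R]_m -> R)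
  (X : set 'rV[R]_n) (Y : set 'rV[R]_m) (xbar : 'rV[R]_n) (ybar : 'rV[R]_m) :=
  X xbar /\ Y ybar /\
  exists d0 tau, 0 < d0 /\ radius_function tau /\ minimax_with f X Y xbar ybar d0 tau.

Definition calm_local_minimax (n m : nat) (f : 'rV[R]_n -> 'rV[R]_m -> R)
  (X : set 'rV[R]_n) (Y : set 'rV[R]_m) (xbar : 'rV[R]_n) (ybar : 'rV[R]_m) :=
  X xbar /\ Y ybar /\
  exists d0 tau, 0 < d0 /\ radius_function tau /\ calm_at0 tau /\
    minimax_with f X Y xbar ybar d0 tau.

End Defs.

(* Write z = (xbar, ybar) and F = joint f.  Norms on row vectors are either
   the Euclidean norm [enorm] of the definitions or the max-norm `|.| of the
   library; they are equivalent, and the max-norm is the one for which the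
   library provides compactness of the unit sphere.

   1. Since F is twice semidifferentiable, the liminfs defining d F(z) and
      d^2 F(z) are limits; restricting them to directions (0, h) computes the
      subderivatives of f(xbar, .) at ybar.
   2. Directional decrease: for every unit direction h there is r > 0 such
      that every feasible point z + t w with 0 < t < r and w within r of
      (0, h) satisfies F(z + t w) < F(z).  For h tangent to Y this follows
      from the second-order hypothesis, by comparing the second-order
      difference quotient of F with the liminf defining d^2 delta; for h not
      tangent to Y there are no such feasible points at all.
   3. Compactness of the unit sphere makes the radius uniform, which gives the
      growth estimate |y - ybar| E <= |x - xbar| for feasible (x, y) near z
      with f(x, y) >= f(xbar, ybar).
   4. Any such growth estimate turns a local minimax point into a calm one:
      the maximizer of f(x, .) on the old ball Y /\ B_tau(d)(ybar) lies in a
      ball of radius kappa d, so d |-> kappa d is a calm radius function. *)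

From HB Require Import structures.
From mathcomp Require Import all_boot all_order all_algebra.
From mathcomp Require Import all_classical all_reals all_analysis.
From mathcomp Require Import ring lra.
Import Order.TTheory GRing.Theory Num.Theory.
Import numFieldNormedType.Exports.
Local Open Scope classical_set_scope.
Local Open Scope ring_scope.
Set Implicit Arguments. Unset Strict Implicit. Unset Printing Implicit Defensive.

Section Norms.
Variable R : realType.

Lemma enorm_ge0 k (v : 'rV[R]_k) : 0 <= enorm v.
Proof. exact: sqrtr_ge0. Qed.

Lemma enorm0 k : enorm (0 : 'rV[R]_k) = 0.
Proof. by rewrite /enorm big1 ?sqrtr0 // => i _; rewrite mxE expr0n. Qed.

Lemma coord_le_enorm k (v : 'rV[R]_k) i : `|v ord0 i| <= enorm v.
Proof.
rewrite /enorm -sqrtr_sqr ler_wsqrtr //.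
by rewrite (bigD1 i) //= lerDl; apply: sumr_ge0 => j _; exact: sqr_ge0.
Qed.

Lemma entry_le_mxnorm k l (M : 'M[R]_(k, l)) i j : `|M i j| <= `|M|.
Proof.
rewrite [X in _ <= X]/Num.norm /= mx_normrE.
exact: (le_bigmax _ (fun ij : 'I_k * 'I_l => `|M ij.1 ij.2|) (i, j)).
Qed.

Lemma mxnorm_le_entries k l (M : 'M[R]_(k, l)) c : 0 <= c ->
  (forall i j, `|M i j| <= c) -> `|M| <= c.
Proof.
move=> c0 HM; rewrite [X in X <= _]/Num.norm /= mx_normrE.
by apply: bigmax_le => // ij _; apply: HM.
Qed.

Lemma mxnorm_le_enorm k (v : 'rV[R]_k) : `|v| <= enorm v.
Proof.
apply: mxnorm_le_entries; first exact: enorm_ge0.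
by move=> i j; rewrite (ord1 i); apply: coord_le_enorm.
Qed.

Lemma enorm_le_mxnorm k (v : 'rV[R]_k) : enorm v <= k%:R * `|v|.
Proof.
have Kv0 : 0 <= k%:R * `|v| by rewrite mulr_ge0.
rewrite /enorm -(ger0_norm Kv0) -sqrtr_sqr ler_wsqrtr //.
apply: (@le_trans _ _ (\sum_(i < k) `|v| ^+ 2)).
  apply: ler_sum => i _; rewrite -real_normK ?num_real //.
  by rewrite lerXn2r ?nnegrE // entry_le_mxnorm.
rewrite sumr_const card_ord.
case: k {Kv0} v => [|k] v; first by rewrite mulr0n mul0r expr0n.
rewrite -mulr_natl; have k1 : 1 <= k.+1%:R :> R by rewrite ler1n.
have := normr_ge0 v; set a := `|v|; nra.
Qed.

Lemma enorm_row0 n m (v : 'rV[R]_m) : enorm (row_mx (0 : 'rV[R]_n) v) = enorm v.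
Proof.
rewrite /enorm big_split_ord /= big1 ?add0r; last first.
  by move=> i _; rewrite row_mxEl mxE expr0n.
by congr Num.sqrt; apply: eq_bigr => i _; rewrite row_mxEr.
Qed.

Lemma enorm_rsubmx n m (v : 'rV[R]_(n + m)) : enorm (rsubmx v) <= enorm v.
Proof.
rewrite /enorm ler_wsqrtr // big_split_ord /= ler_wpDl //.
  by apply: sumr_ge0 => i _; exact: sqr_ge0.
by apply: ler_sum => i _; rewrite mxE.
Qed.

Lemma mxnorm_row_mx n m (a : 'rV[R]_n) (b : 'rV[R]_m) :
  `|row_mx a b| <= `|a| + `|b|.
Proof.
apply: mxnorm_le_entries; first by rewrite addr_ge0.
move=> i j; rewrite mxE; case: (fintype.split j) => j'.
  by rewrite (le_trans (entry_le_mxnorm _ _ _)) // lerDl.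
by rewrite (le_trans (entry_le_mxnorm _ _ _)) // lerDr.
Qed.

Lemma row_mx_shift n m (xb u : 'rV[R]_n) (yb v : 'rV[R]_m) (t : R) :
  row_mx xb yb + t *: row_mx u v = row_mx (xb + t *: u) (yb + t *: v).
Proof. by rewrite scale_row_mx add_row_mx. Qed.

End Norms.

Section RealLimits.
Variable R : realType.

(* lim_{t \downarrow 0, w' -> w} g t w' = L; [has_real_limit0 g w] is
   exactly [exists L, real_limit0 g w L]. *)
Definition real_limit0 k (g : R -> 'rV[R]_k -> \bar R) (w : 'rV[R]_k) (L : R) :=
  forall e : R, 0 < e -> exists2 d : R, 0 < d &
    forall (t : R) (w' : 'rV[R]_k), 0 < t < d -> enorm (w' - w) < d ->
      ((L - e)%:E < g t w')%E /\ (g t w' < (L + e)%:E)%E.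

Lemma liminf0_real_limit k (g : R -> 'rV[R]_k -> \bar R) w L :
  real_limit0 g w L -> liminf0 (fun _ _ => True) g w = L%:E.
Proof.
move=> gL; apply/eqP; rewrite eq_le; apply/andP; split.
- apply/lee_addgt0Pr => e e0; apply: ge_ereal_sup => _ [r r0 <-].
  have [d d0 Hd] := gL e e0.
  pose t := Num.min r d / 2.
  have rd0 : 0 < Num.min r d by rewrite lt_min r0 d0.
  have t0 : 0 < t by rewrite divr_gt0.
  have t_rd : t < Num.min r d by rewrite /t ltr_pdivrMr // ltr_pMr // ltr1n.
  have [tr td] : t < r /\ t < d by move: t_rd; rewrite lt_min => /andP.
  apply: ge_ereal_inf; exists (g t w).
    by exists (t, w) => //=; rewrite t0 tr subrr enorm0 r0.
  have td' : 0 < t < d by rewrite t0 td.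
  have ww : enorm (w - w) < d by rewrite subrr enorm0.
  have [_ /ltW] := Hd t w td' ww.
  by rewrite EFinD.
- apply/lee_addgt0Pr => e e0; have [d d0 Hd] := gL e e0.
  rewrite -leeBlDr //.
  apply: (@le_trans _ _ (ereal_inf [set g p.1 p.2 | p in
      [set p : R * 'rV[R]_k | 0 < p.1 < d /\ enorm (p.2 - w) < d /\ True]])).
    apply: le_ereal_inf_tmp => _ [[t w'] [/= ht [hw _]] <-].
    by have [/ltW] := Hd t w' ht hw; rewrite EFinB.
  by apply: ereal_sup_ubound; exists d.
Qed.

Lemma real_limit0_row0 n m (g : R -> 'rV[R]_m -> \bar R)
    (G : R -> 'rV[R]_(n + m) -> \bar R) h L :
  (forall t v, g t v = G t (row_mx 0 v)) ->
  real_limit0 G (row_mx 0 h) L -> real_limit0 g h L.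
Proof.
move=> gG GL e e0; have [d d0 Hd] := GL e e0; exists d => // t w' ht hw.
rewrite gG; apply: Hd => //.
by rewrite opp_row_mx add_row_mx oppr0 addr0 enorm_row0.
Qed.

Lemma ereal_gap (a : R) (b : \bar R) :
  (a%:E - b < 0)%E -> exists c, a < c /\ (c%:E < b)%E.
Proof.
case: b => [r| |] //=.
- by rewrite -EFinB lte_fin => ab; exists ((a + r) / 2); rewrite lte_fin; lra.
- by move=> _; exists (a + 1); split; [lra | exact: ltry].
Qed.

Lemma inv_succ_small (e : R) : 0 < e ->
  exists N : nat, forall j, (N <= j)%N -> j.+1%:R^-1 < e.
Proof.
move=> e0; exists (Num.Def.archi_bound e^-1) => j hj.
have e'0 : 0 <= e^-1 by rewrite invr_ge0 ltW.
rewrite invf_plt ?posrE ?ltr0n //; apply: (lt_le_trans (archi_boundP e'0)).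
by rewrite ler_nat; exact: leqW.
Qed.

Lemma not_tangent_infeasible m (Y : set 'rV[R]_m) (ybar h : 'rV[R]_m) :
  ~ tangent_cone Y ybar h -> exists2 r, 0 < r & forall t (v : 'rV_m),
    0 < t < r -> enorm (v - h) < r -> ~ Y (ybar + t *: v).
Proof.
move=> nT; apply: contrapT => near_feasible; apply: nT.
have pick j : exists p : R * 'rV[R]_m,
    0 < p.1 < j.+1%:R^-1 /\ enorm (p.2 - h) < j.+1%:R^-1 /\
    Y (ybar + p.1 *: p.2).
  apply: contrapT => none; apply: near_feasible.
  exists j.+1%:R^-1; first by rewrite invr_gt0 ltr0n.
  by move=> t v ht hv hY; apply: none; exists (t, v).
have [g Hg] := choice pick.
exists (fun j => (g j).1), (fun j => (g j).2); split; last split.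
- by move=> j; have [/andP[]] := Hg j.
- move=> e e0; have [N HN] := inv_succ_small e0; exists N => j hj.
  have [/andP[t0 t1] [hv _]] := Hg j; have := HN j hj.
  by rewrite gtr0_norm // => je; split; apply: lt_trans je.
- by move=> j; have [_ []] := Hg j.
Qed.

End RealLimits.

Section DirectionalDecrease.
Variables (R : realType) (n m : nat) (X : set 'rV[R]_n) (Y : set 'rV[R]_m)
  (f : 'rV[R]_n -> 'rV[R]_m -> R) (xbar : 'rV[R]_n) (ybar : 'rV[R]_m).

Let z := row_mx xbar ybar.
Let F := joint f.

Lemma joint_row0 t v : F (z + t *: row_mx 0 v) = f xbar (ybar + t *: v).
Proof. by rewrite /F /z /joint row_mx_shift row_mxKl row_mxKr scaler0 addr0. Qed.

Lemma joint_center : F z = f xbar ybar.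
Proof. by rewrite /F /z /joint row_mxKl row_mxKr. Qed.

Lemma subderiv_row0 : semidifferentiable F z -> forall v,
  subderiv (f xbar) ybar v = subderiv F z (row_mx 0 v).
Proof.
move=> sdF v; have [L FL] := sdF (row_mx 0 v).
rewrite /subderiv (liminf0_real_limit FL) (@liminf0_real_limit _ _ _ _ L) //.
apply: (real_limit0_row0 (G := dq1 F z)) FL => t w.
by rewrite /dq1 joint_row0 joint_center.
Qed.

Lemma subderiv2_row0 : twice_semidifferentiable F z -> forall h,
  exists2 L2, subderiv2 (f xbar) ybar h = L2%:E &
    real_limit0 (dq2 F z) (row_mx 0 h) L2.
Proof.
move=> [sdF tsd2F] h; have [L FL] := tsd2F (row_mx 0 h); exists L => //.
rewrite /subderiv2 (@liminf0_real_limit _ _ _ _ L) //.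
apply: (real_limit0_row0 (G := dq2 F z)) FL => t w.
by rewrite /dq2 joint_row0 joint_center subderiv_row0.
Qed.

Definition decreases_near (h : 'rV[R]_m) (r : R) : Prop :=
  forall t w, 0 < t < r -> `|w - row_mx 0 h| < r ->
    prodset X Y (z + t *: w) -> F (z + t *: w) < F z.

(* The key computation: where the second-order condition holds at h, a
   feasible point z + t w with F(z + t w) >= F(z) would make the
   second-order quotient of F at (t, w) at least -2 dF(z)(w) / t, which the
   condition bounds below by a constant c exceeding d^2 f(xbar,.)(ybar)(h),
   the limit of those quotients. *)
Lemma second_order_decrease h : twice_semidifferentiable F z ->
  (subderiv2 (f xbar) ybar h
      - d2indicator (prodset X Y) z (subderiv F z) (row_mx 0 h) < 0)%E ->
  exists2 r, 0 < r & forall t w, 0 < t < r -> enorm (w - row_mx 0 h) < r ->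
    prodset X Y (z + t *: w) -> F (z + t *: w) < F z.
Proof.
move=> tsd; have [L2 -> FL2] := subderiv2_row0 tsd h.
move=> /ereal_gap [c [L2c /ereal_sup_gt [_ [e e0 <-] c_inf]]].
have cL2 : 0 < c - L2 by rewrite subr_gt0.
have [d d0 Hd] := FL2 (c - L2) cL2.
exists (Num.min e d); first by rewrite lt_min e0 d0.
move=> t w /andP[t0]; rewrite !lt_min => /andP[te td] /andP[we wd] feas.
rewrite ltNge; apply/negP; rewrite -subr_ge0; set D := _ - F z => D0.
have [L1 FL1] := tsd.1 w.
have c_lt : (c%:E < (- 2)%:E * subderiv F z w * (t^-1)%:E)%E.
  apply: (lt_le_trans c_inf); apply: ereal_inf_lbound.
  by exists (t, w) => //=; rewrite t0 te.
have td' : 0 < t < d by rewrite t0 td.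
have [_ q_lt] := Hd t w td' wd.
move: c_lt q_lt; rewrite /dq2 /subderiv (liminf0_real_limit FL1).
rewrite -/D -!EFinM !lte_fin [L2 + _]addrC subrK.
have tn0 : t != 0 by rewrite gt_eqF.
have -> : (D - t * L1) / (t ^+ 2 / 2) = D / (t ^+ 2 / 2) + - 2 * L1 / t.
  by field.
have quot_le : - 2 * L1 / t <= D / (t ^+ 2 / 2) + - 2 * L1 / t.
  by rewrite lerDr divr_ge0 // divr_ge0 // sqr_ge0.
by move=> c1 c2; have := lt_trans (le_lt_trans quot_le c2) c1; rewrite ltxx.
Qed.

(* Otherwise, with s = |y - ybar|, the direction
   (x - xbar, y - ybar) / s is within r of some (0, h) whose neighbourhood of
   radius r forces f(x, y) < f(xbar, ybar). *)
Lemma growth_estimate (E : R) :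
  (forall h', `|h'| = 1 -> exists h r,
     [/\ 0 < r, decreases_near h r, E <= r / 2 & `|h - h'| < r / 2]) ->
  forall x y, X x -> Y y -> f xbar ybar <= f x y -> `|y - ybar| < E ->
    `|y - ybar| * E <= `|x - xbar|.
Proof.
move=> unifE x y Xx Yy fxy yE.
have [->|y_ne] := eqVneq y ybar; first by rewrite subrr normr0 mul0r.
set s := `|y - ybar|.
have s0 : 0 < s by rewrite normr_gt0 subr_eq0.
have sV0 : 0 <= s^-1 by rewrite invr_ge0 ltW.
pose h' := s^-1 *: (y - ybar); pose u := s^-1 *: (x - xbar).
have h'1 : `|h'| = 1 by rewrite normrZ ger0_norm // mulVf ?gt_eqF.
have [h [r [r0 dec Er hh']]] := unifE h' h'1.
rewrite leNgt; apply/negP => small_x.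
have uE : `|u| < E.
  by rewrite normrZ ger0_norm // mulrC ltr_pdivrMr // mulrC.
have sr : 0 < s < r.
  rewrite s0 (lt_le_trans yE) // (le_trans Er) // ler_pdivrMr // ler_peMr //.
  - exact: ltW.
  - by rewrite ler1n.
have near_h : `|row_mx u h' - row_mx 0 h| < r.
  rewrite opp_row_mx add_row_mx oppr0 addr0.
  apply: (le_lt_trans (mxnorm_row_mx _ _)); rewrite distrC.
  apply: (lt_le_trans (ltrD uE hh')); apply: (le_trans (lerD Er (lexx _))).
  by rewrite -splitr.
have zxy : row_mx xbar ybar + s *: row_mx u h' = row_mx x y.
  by rewrite row_mx_shift !scalerA divff ?gt_eqF // !scale1r !subrKC.
have feas : prodset X Y (z + s *: row_mx u h').
  by rewrite /z zxy; split; rewrite ?row_mxKl ?row_mxKr.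
have := dec s (row_mx u h') sr near_h feas.
by rewrite /z zxy /F /joint !row_mxKl !row_mxKr ltNge fxy.
Qed.

Hypothesis tsdF : twice_semidifferentiable F z.
Hypothesis second_order : forall h : 'rV[R]_m, tangent_cone Y ybar h ->
  h != 0 ->
  (subderiv2 (f xbar) ybar h
     - d2indicator (prodset X Y) z (subderiv F z) (row_mx 0 h) < 0)%E.

Lemma unit_direction_decrease h : `|h| = 1 ->
  exists2 r, 0 < r & decreases_near h r.
Proof.
move=> h1; have hn0 : h != 0 by rewrite -normr_eq0 h1 oner_eq0.
pose K : R := (n + m)%:R + 1.
have K1 : 1 <= K by rewrite /K lerDr.
have K0 : 0 < K by exact: lt_le_trans K1.
(* a max-norm ball of radius r / K lies in the Euclidean ball of radius r *)
have shrink r t (w : 'rV[R]_(n + m)) : 0 < r -> 0 < t < r / K ->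
    `|w - row_mx 0 h| < r / K -> 0 < t < r /\ enorm (w - row_mx 0 h) < r.
  move=> r0 /andP[t0 tr] wr.
  have rK : r / K <= r by rewrite ler_pdivrMr // ler_peMr // ltW.
  split; first by rewrite t0 (lt_le_trans tr rK).
  apply: (le_lt_trans (enorm_le_mxnorm _)).
  rewrite ltr_pdivlMr // in wr; apply: le_lt_trans wr.
  by rewrite mulrC ler_wpM2l // /K lerDl.
case: (pselect (tangent_cone Y ybar h)) => [hT|nT].
- have [r r0 dec] := second_order_decrease tsdF (second_order hT hn0).
  exists (r / K); first by rewrite divr_gt0.
  by move=> t w ht hw; have [] := shrink r t w r0 ht hw; exact: dec.
- have [r r0 infeas] := not_tangent_infeasible nT.
  exists (r / K); first by rewrite divr_gt0.
  move=> t w ht hw [_ hY]; have [tr wr] := shrink r t w r0 ht hw.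
  exfalso; apply: (infeas t (rsubmx w) tr).
    have -> : rsubmx w - h = rsubmx (w - row_mx 0 h).
      by rewrite -{2}[w]hsubmxK opp_row_mx add_row_mx row_mxKr.
    exact: le_lt_trans (enorm_rsubmx _) wr.
  by move: hY; rewrite -{1}[w]hsubmxK row_mx_shift row_mxKr.
Qed.

End DirectionalDecrease.

Section Calmness.
Variable R : realType.

Lemma unit_sphere_compact k : compact [set h : 'rV[R]_k | `|h| = 1].
Proof.
apply: bounded_closed_compact.
  exists 1; split; first exact: num_real.
  by move=> M M1 x /= ->; rewrite ltW.
have -> : [set h : 'rV[R]_k | `|h| = 1] = Num.norm @^-1` [set x : R | x = 1].
  by [].
apply: preimage_closed; last exact: closed_eq.
by move=> x _; exact: norm_continuous.
Qed.

(* Compactness of the unit sphere: if each unit vector h has a radius r_h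
   with property Q, finitely many balls of radius r_h / 2 cover the sphere,
   and E = min r_h / 2 is a uniform Lebesgue-type number for the cover. *)
Lemma unit_sphere_uniform_radius k (Q : 'rV[R]_k -> R -> Prop) :
  (forall h, `|h| = 1 -> exists2 r, 0 < r & Q h r) ->
  exists2 E, 0 < E & forall h', `|h'| = 1 -> exists h r,
     [/\ 0 < r, Q h r, E <= r / 2 & `|h - h'| < r / 2].
Proof.
move=> HQ.
have rad_at h : exists r : R, 0 < r /\ (`|h| = 1 -> Q h r).
  case: (pselect (`|h| = 1)) => [h1|nh1]; last by exists 1; split => // /nh1.
  by have [r r0 q] := HQ h h1; exists r.
have [rad rad_ok] := choice rad_at.
have := @unit_sphere_compact k; rewrite compact_cover.
move=> /(_ _ [set h : 'rV[R]_k | `|h| = 1] (fun h => ball h (rad h / 2))) [].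
- by move=> h _; exact: ball_open.
- move=> h h1; exists h => //; apply: ballxx.
  by rewrite divr_gt0 // (rad_ok h).1.
move=> D sub cov.
exists (\big[Num.min/1]_(i <- finmap.enum_fset D) (rad i / 2)).
  apply: (big_ind (fun r : R => 0 < r)) => //.
    by move=> a b a0 b0; rewrite lt_min a0 b0.
  by move=> i _; rewrite divr_gt0 // (rad_ok i).1.
move=> h' h'1; have [i Di bi] := cov h' h'1.
have i1 : `|i| = 1 by have := sub i Di; rewrite inE.
exists i, (rad i); split.
- exact: (rad_ok i).1.
- exact: (rad_ok i).2.
- exact: ge_bigmin_seq.
- by move: bi; rewrite -ball_normE.
Qed.

Lemma linear_radius_function (kappa : R) : 0 < kappa ->
  radius_function (fun d => kappa * d) /\ calm_at0 (fun d => kappa * d).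
Proof.
move=> k0; split; last by exists kappa, 1; split => //; split => // d _.
split; first by rewrite mulr0.
split; first by move=> d d0; rewrite mulr_ge0 // ltW.
move=> e e0; exists (e / kappa); first by rewrite divr_gt0.
by move=> d /andP[_ hd]; rewrite mulrC -ltr_pdivlMr.
Qed.

(* A growth estimate near ybar turns a local minimax point into a calm one:
   a maximizer ym of f(x, .) on Y /\ B_tau(d)(ybar) has f(x, ym) >=
   f(xbar, ybar), so |ym - ybar| <= d / E once tau(d) < E, and ym is
   admissible in the ball of radius kappa d = (m + 1) d / E.  The new
   threshold min d0 (d1 / 2) keeps d strictly below the d1 at which tau
   drops under E. *)
Lemma calm_of_growth n m (X : set 'rV[R]_n) (Y : set 'rV[R]_m)
    (f : 'rV[R]_n -> 'rV[R]_m -> R) (xbar : 'rV[R]_n) (ybar : 'rV[R]_m) (E : R) :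
  (forall (x : 'rV[R]_n) (y0 : 'rV[R]_m) (eps : R), X x -> Y y0 -> 0 <= eps ->
     exists2 y, (Y `&` cball y0 eps) y &
       forall y', (Y `&` cball y0 eps) y' -> f x y' <= f x y) ->
  local_minimax f X Y xbar ybar -> 0 < E ->
  (forall x y, X x -> Y y -> f xbar ybar <= f x y -> `|y - ybar| < E ->
     `|y - ybar| * E <= `|x - xbar|) ->
  calm_local_minimax f X Y xbar ybar.
Proof.
move=> attain [Xx [Yy [d0 [tau [d00 [[_ [tau_ge0 tau_lim] mm]]]]]]] E0 growth.
have [d1 d10 tauE] := tau_lim E E0.
pose kappa : R := (m%:R + 1) / E.
have kappa0 : 0 < kappa by rewrite divr_gt0 // ltr_wpDl.
have [rad_kappa calm_kappa] := linear_radius_function kappa0.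
split=> //; split=> //; exists (Num.min d0 (d1 / 2)), (fun d => kappa * d).
split; first by rewrite lt_min d00 divr_gt0.
do 2!split=> //.
move=> d /andP[d0pos]; rewrite le_min => /andP[dd0 dd1] x y Xx' xd Yy' yd.
have d_d0 : 0 < d <= d0 by rewrite d0pos dd0.
have [fy fmax] := mm d d_d0 x y Xx' xd Yy' yd.
split=> //.
have [ym [Yym ym_ball] ym_max] :=
  attain x ybar (tau d) Xx' Yy (tau_ge0 d (ltW d0pos)).
have f_ym : f xbar ybar <= f x ym.
  rewrite -lee_fin; apply: (le_trans fmax); apply: ge_ereal_sup.
  by move=> _ [y' y'_ball <-]; rewrite lee_fin; apply: ym_max.
have tau_d : tau d < E.
  apply: tauE; rewrite d0pos /=; apply: le_lt_trans dd1 _.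
  by rewrite ltr_pdivrMr // ltr_pMr // ltr1n.
have ymE : `|ym - ybar| < E.
  exact: le_lt_trans (mxnorm_le_enorm _) (le_lt_trans ym_ball tau_d).
have ym_d : `|ym - ybar| <= d / E.
  rewrite ler_pdivlMr //; apply: le_trans (growth x ym Xx' Yym f_ym ymE) _.
  exact: le_trans (mxnorm_le_enorm _) xd.
apply: (@le_trans _ _ (f x ym)%:E); first by rewrite lee_fin.
apply: ereal_sup_ubound; exists ym => //; split => //.
apply: (le_trans (enorm_le_mxnorm _)).
by rewrite /kappa mulrAC -mulrA ler_pM // ?lerDl.
Qed.

End Calmness.

Unset Implicit Arguments. Set Strict Implicit. Set Printing Implicit Defensive.

Theorem mainTheorem7 (R : realType) (n m : nat)
  (X : set 'rV[R]_n) (Y : set 'rV[R]_m) (f : 'rV[R]_n -> 'rV[R]_m -> R)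
  (xbar : 'rV[R]_n) (ybar : 'rV[R]_m) :
  X !=set0 -> Y !=set0 -> closed X -> closed Y ->
  (* standing assumption: the local maxima in y are attained *)
  (forall (x : 'rV[R]_n) (y0 : 'rV[R]_m) (eps : R), X x -> Y y0 -> 0 <= eps ->
     exists2 y, (Y `&` cball y0 eps) y &
       forall y', (Y `&` cball y0 eps) y' -> f x y' <= f x y) ->
  local_minimax f X Y xbar ybar ->
  twice_semidifferentiable (joint f) (row_mx xbar ybar) ->
  (forall h : 'rV[R]_m, tangent_cone Y ybar h -> h != 0 ->
     (subderiv2 (f xbar) ybar h
      - d2indicator (prodset X Y) (row_mx xbar ybar)
          (subderiv (joint f) (row_mx xbar ybar)) (row_mx 0 h) < 0)%E) ->
  calm_local_minimax f X Y xbar ybar.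
Proof.
move=> _ _ _ _ attain minimax tsdF second_order.
have [E E0 unifE] := unit_sphere_uniform_radius
  (unit_direction_decrease tsdF second_order).
exact: calm_of_growth attain minimax E0 (growth_estimate unifE).
Qed.
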